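(* Let $G$ be a group and $\rho:(X,G)\to(Y,G)$ a factor map of topological dynamical systems which is an $n$-to-$1$ extension, with $(X,G)$ minimal. Suppose an abelian group $H$ acts continuously on $X$, commuting with the $G$-action, preserving the fibres of $\rho$ and acting transitively on each fibre. Suppose $(X,G)\xrightarrow{\rho'}(Z,G)\xrightarrow{\rho''}(Y,G)$ are factor maps with $\rho''\circ\rho'=\rho$. Then $(Z,G)$ is an $m$-to-$1$ extension of $(Y,G)$ (via $\rho''$) with $m$ dividing $n$, and there is a subgroup $H'\subset H$ such that (i) $H/H'$ acts continuously on $Z$, commuting with the $G$-action, preserving the fibres of $\rho''$ and acting transitively on each fibre; and (ii) $H'$, acting on $X$ by restriction of the $H$-action, preserves the fibres of $\rho'$ and acts transitively on each fibre.
   Context: A topological dynamical system $(X,G)$ is a compact Hausdorff space $X$ with a continuous action of $G$; it is minimal if every orbit is dense. A factor map is a continuous $G$-equivariant surjection. A factor map $\rho:(X,G)\to(Y,G)$ is an $n$-to-$1$ extension if every fibre $\rho^{-1}(y)$ has the same finite cardinality $n$. *)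

From HB Require Import structures.
From mathcomp Require Import all_boot all_order all_algebra.
From mathcomp Require Import monoid.
From mathcomp Require Import all_classical all_reals topology.
Set Implicit Arguments. Unset Strict Implicit. Unset Printing Implicit Defensive.
Import Order.TTheory GRing.Theory.
Local Open Scope classical_set_scope.

Definition is_tds (G : groupType) (X : topologicalType) (act : G -> X -> X) :=
  [/\ hausdorff_space X, compact [set: X],
      (forall x, act 1%g x = x),
      (forall g h x, act (g * h)%g x = act g (act h x)) &
      (forall g, continuous (act g))].

Definition minimal_tds (G : groupType) (X : topologicalType) (act : G -> X -> X) :=
  forall x : X, closure (range (fun g => act g x)) = [set: X].

Definition factor_map (G : groupType) (X Y : topologicalType)
  (actX : G -> X -> X) (actY : G -> Y -> Y) (f : X -> Y) :=
  [/\ continuous f, (forall g x, f (actX g x) = actY g (f x)) & (forall y, exists x, f x = y)].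

Definition n_to_1 (X Y : Type) (f : X -> Y) (n : nat) :=
  forall y : Y, card_eq (f @^-1` [set y]) `I_n.

Definition is_action (H : zmodType) (X : Type) (a : H -> X -> X) :=
  (forall x, a 0%R x = x) /\ (forall h k x, a (h + k)%R x = a h (a k x)).

(* the H-action a on X is continuous, commutes with the G-action, preserves
   the fibres of f and acts transitively on each fibre; the acting elements
   are restricted to the subset S of H (S = setT for the full action). *)
Definition fibre_transitive_on (G : groupType) (H : zmodType) (X Y : topologicalType)
  (actX : G -> X -> X) (a : H -> X -> X) (S : set H) (f : X -> Y) :=
  [/\ (forall h, S h -> continuous (a h)),
      (forall h g x, S h -> a h (actX g x) = actX g (a h x)),
      (forall h x, S h -> f (a h x) = f x) &
      (forall x x', f x = f x' -> exists2 h, S h & a h x = x')].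

Definition subgroup (H : zmodType) (S : set H) :=
  S 0%R /\ (forall h k, S h -> S k -> S (h - k)%R).

From HB Require Import structures.
From mathcomp Require Import all_boot all_order all_algebra.
From mathcomp Require Import monoid.
From mathcomp Require Import all_classical all_reals topology.
From mathcomp Require Import finmap.

Set Implicit Arguments.
Unset Strict Implicit.
Unset Printing Implicit Defensive.

Local Open Scope classical_set_scope.
Local Open Scope card_scope.

(* Let H' be the set of h in H moving no point out of its rho'-fibre. If h keeps
   one point x in its rho'-fibre then it keeps all of them: such points form a
   closed G-invariant set containing x, hence all of X by minimality.  As H is
   abelian and transitive on rho-fibres, this makes the H-action descend to Z with
   H' transitive on rho'-fibres.  Every rho''-fibre is then a copy of H/H', so all
   have the same size m, and a rho-fibre is in bijection with a rho''-fibre times a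
   rho'-fibre, whence n = m * |rho'-fibre|.  The induced action is continuous
   because rho' is a closed map, X being compact and Z Hausdorff. *)

Lemma closed_equalizer (T U : topologicalType) (f g : T -> U) :
  hausdorff_space U -> continuous f -> continuous g ->
  closed [set x | f x = g x].
Proof.
move=> hU cf cg; apply/closure_id; apply/seteqP; split => [x|x cx].
  exact: subset_closure.
apply: hU => A B nA nB.
have : nbhs x (f @^-1` A `&` g @^-1` B) by apply: filterI; [exact: cf | exact: cg].
by move=> /cx [u [/= e [Au Bu]]]; exists (f u); split => //; rewrite e.
Qed.

Lemma minimal_invariant_closed (G : groupType) (X : topologicalType)
    (act : G -> X -> X) (A : set X) :
  minimal_tds act -> closed A -> (forall g x, A x -> A (act g x)) ->
  A !=set0 -> A = setT.
Proof.
move=> minX /closure_id cA invA [x0 Ax0]; apply/seteqP; split => // x _.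
have : closure (range (act^~ x0)) x by rewrite minX.
by rewrite cA; apply: closureS => _ [g _ <-]; exact: invA.
Qed.

Lemma continuous_of_compact_quotient (T U V : topologicalType)
    (q : T -> U) (f : U -> V) :
  compact [set: T] -> hausdorff_space U -> continuous q ->
  (forall u, exists t, q t = u) -> continuous (f \o q) -> continuous f.
Proof.
move=> cT hU cq qsurj cfq; apply/continuous_closedP => C cC.
have -> : f @^-1` C = q @` ((f \o q) @^-1` C).
  apply/seteqP; split => [u Cu|_ [t Ct <-] //].
  by have [t qt] := qsurj u; exists t => //=; rewrite qt.
apply: compact_closed => //; apply: continuous_compact.
  exact: continuous_subspaceT.
by apply: (subclosed_compact _ cT) => //; exact: (continuous_closedP _).1.
Qed.

Lemma card_fsetM (K K' : choiceType) (A : {fset K}) (B : {fset K'}) :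
  #|` (A `*` B)%fset| = (#|` A| * #|` B|)%N.
Proof.
rewrite /fsetM (perm_size (enum_imfset2 _ _)) ?size_allpairs //.
by move=> [x y] [x' y'] _ _ /= [-> ->].
Qed.

Lemma card_eq_range (I : choiceType) (T U : Type) (f : I -> T) (g : I -> U) :
  (forall i j, f i = f j <-> g i = g j) -> range f #= range g.
Proof.
move=> fg; have [[i0 _]|I0] := pselect (exists i : I, True); last first.
  have r0 (W : Type) (w : I -> W) : range w = set0.
    by apply/seteqP; split => // w' [i _ _]; case: I0; exists i.
  by rewrite !r0; exact: card_eq00.
pose phi t := g (xget i0 [set i | f i = t]).
have phiE i : phi (f i) = g i.
  by apply/fg; apply: (@xgetPex _ i0 [set j | f j = f i]); exists i.
have -> : range g = phi @` range f.
  apply/seteqP; split => [_ [i _ <-]|_ [t [i _ <-] <-]]; last by exists i.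
  by exists (f i); [exists i | rewrite phiE].
apply: card_esym; apply: inj_card_eq => _ _ /set_mem[i _ <-] /set_mem[j _ <-].
by rewrite !phiE => /fg.
Qed.

Section FibreTransitiveAction.
Variables (G : groupType) (H : zmodType) (X Y Z : topologicalType).
Variables (actX : G -> X -> X) (actZ : G -> Z -> Z) (a : H -> X -> X).
Variables (rho : X -> Y) (rho1 : X -> Z) (rho2 : Z -> Y).
Hypothesis hausdorffZ : hausdorff_space Z.
Hypothesis minimalX : minimal_tds actX.
Hypothesis rho1_cont : continuous rho1.
Hypothesis rho1_equiv : forall g x, rho1 (actX g x) = actZ g (rho1 x).
Hypothesis a_action : is_action a.
Hypothesis a_fibre : fibre_transitive_on actX a setT rho.
Hypothesis rho21 : forall x, rho2 (rho1 x) = rho x.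
Variable s : Z -> X.
Hypothesis rho1K : cancel s rho1.

Definition stab : set H := [set h | forall x, rho1 (a h x) = rho1 x].

Let a0 x : a 0%R x = x. Proof. by case: a_action. Qed.
Let aD h k x : a (h + k)%R x = a h (a k x). Proof. by case: a_action => _. Qed.

Let aK h : cancel (a h) (a (- h)%R).
Proof. by move=> u; rewrite -aD GRing.addNr a0. Qed.

Let aNK h : cancel (a (- h)%R) (a h).
Proof. by move=> u; rewrite -aD GRing.subrr a0. Qed.

Let a_transitive x x' : rho x = rho x' -> exists h, a h x = x'.
Proof. by case: a_fibre => _ _ _ /(_ x x') tr /tr [h _ <-]; exists h. Qed.

Lemma stab_of_point h x : rho1 (a h x) = rho1 x -> stab h.
Proof.
case: a_fibre => a_cont a_comm _ _ hx u.
suff /seteqP[_ /(_ u I)//] : [set v | rho1 (a h v) = rho1 v] = setT.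
apply: (minimal_invariant_closed minimalX).
- apply: closed_equalizer => // v.
  by apply: continuous_comp; [exact: a_cont | exact: rho1_cont].
- by move=> g v /= hv; rewrite a_comm // !rho1_equiv hv.
- by exists x.
Qed.

Lemma rho1_a_shift h k x u :
  rho1 (a h x) = rho1 (a k x) -> rho1 (a h u) = rho1 (a k u).
Proof.
move=> hk; have /(_ (a k u)) : stab (h - k)%R.
  by apply: (stab_of_point (x := a k x)); rewrite -aD GRing.subrK.
by rewrite -aD GRing.subrK.
Qed.

(* H is abelian: v = a k u, and a h (a k u) = a k (a h u). *)
Lemma rho1_a_compat h u v : rho1 u = rho1 v -> rho1 (a h u) = rho1 (a h v).
Proof.
move=> uv; have [k ekv] : exists k, a k u = v by apply: a_transitive; rewrite -!rho21 uv.
subst v; have : rho1 (a k u) = rho1 (a 0%R u) by rewrite a0 uv.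
by move=> /(rho1_a_shift (a h u)); rewrite a0 -!aD GRing.addrC => ->.
Qed.

Lemma stab_subgroup : subgroup stab.
Proof.
split=> [x|h k Hh Hk x]; first by rewrite a0.
by rewrite aD Hh -[in RHS](a0 x) -(GRing.subrr k) aD Hk.
Qed.

Lemma stab_fibre_transitive : fibre_transitive_on actX a stab rho1.
Proof.
case: a_fibre => a_cont a_comm _ _; split=> [h _|h g x _|h x //|x x' xx'].
- exact: a_cont.
- exact: a_comm.
have [h ehx] : exists h, a h x = x' by apply: a_transitive; rewrite -!rho21 xx'.
by exists h => //; apply: (stab_of_point (x := x)); rewrite ehx.
Qed.

Lemma rho2_fibre_range x :
  rho2 @^-1` [set rho x] = range (fun h => rho1 (a h x)).
Proof.
case: a_fibre => _ _ a_fib _; apply/seteqP; split=> [z /= zx|_ [h _ <-]].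
  have [h ehx] : exists h, a h x = s z by apply: a_transitive; rewrite -[rho (s z)]rho21 rho1K zx.
  by exists h; rewrite // ehx rho1K.
by rewrite /= rho21 a_fib.
Qed.

Lemma rho2_fibre_image x :
  rho2 @^-1` [set rho x] = rho1 @` (rho @^-1` [set rho x]).
Proof.
apply/seteqP; split=> [z /= zx|_ [u /= ux <-]]; last by rewrite /= rho21.
by exists (s z); rewrite //= -[rho (s z)]rho21 rho1K.
Qed.

Lemma rho2_fibre_card_eq x x' :
  rho2 @^-1` [set rho x] #= rho2 @^-1` [set rho x'].
Proof.
rewrite !rho2_fibre_range; apply: card_eq_range => h k.
by split; exact: rho1_a_shift.
Qed.

Lemma rho_fibre_card_eqX x :
  rho2 @^-1` [set rho x] `*` rho1 @^-1` [set rho1 x] #= rho @^-1` [set rho x].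
Proof.
case: a_fibre => _ _ a_fib _.
pose sg z := xget 0%R [set h | rho1 (a h x) = z].
have sgP z : rho2 z = rho x -> rho1 (a (sg z) x) = z.
  move=> zx; apply: (@xgetPex _ 0%R [set h | rho1 (a h x) = z]).
  have : (rho2 @^-1` [set rho x]) z by [].
  by rewrite rho2_fibre_range => -[h _ <-]; exists h.
have sg_rho1 z u : rho2 z = rho x -> rho1 u = rho1 x -> rho1 (a (sg z) u) = z.
  by move=> zx ux; rewrite (rho1_a_compat _ ux) sgP.
pose psi zu := a (sg zu.1) zu.2.
have -> : rho @^-1` [set rho x] =
    psi @` (rho2 @^-1` [set rho x] `*` rho1 @^-1` [set rho1 x]).
  apply/seteqP; split=> [w /= wx|_ [[z u] [/= zx ux] <-]]; last first.
    by rewrite /psi /= a_fib // -[rho u]rho21 ux rho21.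
  pose z := rho1 w; have zx : rho2 z = rho x by rewrite rho21.
  exists (z, a (- sg z)%R w); last exact: aNK.
  split=> //=; have zw : rho1 (a (sg z) x) = rho1 w := sgP z zx.
  by rewrite -(rho1_a_compat (- sg z)%R zw) aK.
apply/card_esym/inj_card_eq => -[z u] [z' u'] /set_mem[/= zx ux] /set_mem[/= z'x u'x].
rewrite /psi /= => e; have ez : z = z' by rewrite -(sg_rho1 z u) // e sg_rho1.
by subst z'; rewrite -(aK (sg z) u) e aK.
Qed.

Lemma rho2_n_to_1 n : (forall y, exists x, rho x = y) -> n_to_1 rho n ->
  exists2 m, n_to_1 rho2 m & (m %| n)%N.
Proof.
move=> rho_surj rho_n; have [[x0 _]|noX] := pselect (exists x : X, True); last first.
  exists 1%N => [y|]; last exact: dvd1n.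
  by have [x _] := rho_surj y; case: noX; exists x.
have fin : finite_set (rho @^-1` [set rho x0]) by apply/finite_setP; exists n.
have fin2 : finite_set (rho2 @^-1` [set rho x0]).
  by rewrite rho2_fibre_image; exact: finite_image.
have fin1 : finite_set (rho1 @^-1` [set rho1 x0]).
  by apply: sub_finite_set fin => u /= ux; rewrite -rho21 ux rho21.
exists #|` fset_set (rho2 @^-1` [set rho x0])|.
  move=> y; have [x <-] := rho_surj y.
  apply: card_eq_trans (rho2_fibre_card_eq x x0) _.
  by rewrite -[X in X #= _](fset_setK fin2); exact/card_eq_fsetP.
have := card_fset_set (card_eq_trans (rho_fibre_card_eqX x0) (rho_n (rho x0))).
by rewrite fset_setX // card_fsetM => <-; exact: dvdn_mulr.
Qed.

Definition induced_action (h : H) (z : Z) : Z := rho1 (a h (s z)).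

Lemma induced_actionE h x : induced_action h (rho1 x) = rho1 (a h x).
Proof. by apply: rho1_a_compat; rewrite rho1K. Qed.

Lemma is_action_induced : is_action induced_action.
Proof.
split=> [z|h k z]; first by rewrite /induced_action a0 rho1K.
have -> : induced_action k z = rho1 (a k (s z)) by [].
by rewrite induced_actionE /induced_action aD.
Qed.

Lemma induced_action_stab h z : stab h -> induced_action h z = z.
Proof. by move=> Hh; rewrite /induced_action Hh rho1K. Qed.

Lemma induced_action_fibre_transitive :
  compact [set: X] -> fibre_transitive_on actZ induced_action setT rho2.
Proof.
case: a_fibre => a_cont a_comm a_fib _ compactX; split=> [h _|h g z _|h z _|z z' zz'].
- apply: (continuous_of_compact_quotient compactX) => // [z|]; first by exists (s z).
  have -> : induced_action h \o rho1 = rho1 \o a h.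
    by apply/funext => x; exact: induced_actionE.
  by move=> x; apply: continuous_comp; [exact: a_cont | exact: rho1_cont].
- by rewrite -{1}(rho1K z) -rho1_equiv induced_actionE a_comm // rho1_equiv.
- by rewrite /induced_action rho21 a_fib // -rho21 rho1K.
have [h ehz] : exists h, a h (s z) = s z'.
  by apply: a_transitive; rewrite -!rho21 !rho1K.
by exists h => //; rewrite /induced_action ehz rho1K.
Qed.

End FibreTransitiveAction.

Theorem lemmaI2p14 (G : groupType) (H : zmodType) (X Y Z : topologicalType)
  (actX : G -> X -> X) (actY : G -> Y -> Y) (actZ : G -> Z -> Z)
  (rho : X -> Y) (rho' : X -> Z) (rho'' : Z -> Y) (n : nat) (a : H -> X -> X) :
  is_tds actX -> is_tds actY -> is_tds actZ ->
  minimal_tds actX ->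
  factor_map actX actY rho -> n_to_1 rho n ->
  is_action a -> fibre_transitive_on actX a setT rho ->
  factor_map actX actZ rho' -> factor_map actZ actY rho'' ->
  (forall x, rho'' (rho' x) = rho x) ->
  exists m : nat, [/\ n_to_1 rho'' m, (m %| n)%N &
    exists H' : set H, [/\ subgroup H',
      (* (i) an action of H/H', i.e. an action of H on Z trivial on H' *)
      (exists b : H -> Z -> Z, [/\ is_action b,
          (forall h z, H' h -> b h z = z) &
          fibre_transitive_on actZ b setT rho'']) &
      (* (ii) the restricted action of H' on X *)
      fibre_transitive_on actX a H' rho']].
Proof.
move=> [_ compactX _ _ _] _ [hausZ _ _ _ _] minX [_ _ rho_surj] rho_n a_act a_fib
  [rho'_cont rho'_equiv rho'_surj] _ rho''_rho'.
have [s rho'K] := choice rho'_surj.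
have [m rho''_m m_n] := rho2_n_to_1 hausZ minX rho'_cont rho'_equiv a_act a_fib
  rho''_rho' rho'K rho_surj rho_n.
exists m; split=> //; exists (stab a rho'); split.
- exact: stab_subgroup.
- exists (induced_action a rho' s); split.
  + exact: (is_action_induced hausZ minX rho'_cont rho'_equiv a_act a_fib rho''_rho' rho'K).
  + exact: induced_action_stab.
  + exact: (induced_action_fibre_transitive hausZ minX rho'_cont rho'_equiv a_act a_fib
      rho''_rho' rho'K compactX).
- exact: (stab_fibre_transitive hausZ minX rho'_cont rho'_equiv a_fib rho''_rho').
Qed.
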